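(* Let $\varepsilon>0$ and let $\mathcal{P}$ be any bounded-derivative property of functions $f:[n]\to\mathbb{R}$. There is a distribution-free tester for $\mathcal{P}$ with proximity parameter $\varepsilon$ making $24\,\varepsilon^{-1}\log n$ queries.
   Context: A bounded-derivative property on $[n]$ is $\mathcal{P}=\{g:[n]\to\mathbb{R}: l(t)\le g(t+1)-g(t)\le u(t)\ \forall t\in[n-1]\}$ for some $l,u:[n-1]\to\mathbb{R}$ with $l(t)<u(t)$. A distribution-free tester does not know the distribution $\mathcal{D}$ on $[n]$ but may draw independent samples from it and query $f$ anywhere; for every $\mathcal{D}$ it must accept with probability $>2/3$ if $f\in\mathcal{P}$ and reject with probability $>2/3$ if $\min_{g\in\mathcal{P}}\Pr_{x\sim\mathcal{D}}[f(x)\ne g(x)]>\varepsilon$. *)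

From HB Require Import structures.
From mathcomp Require Import all_boot all_order all_algebra.
From mathcomp Require Import reals exp.
Set Implicit Arguments. Unset Strict Implicit. Unset Printing Implicit Defensive.
Import Order.TTheory GRing.Theory Num.Theory.
Local Open Scope ring_scope.

(* Domain [n] = {1,...,n} is represented 0-based by 'I_n.  The derivative
   bounds l, u are indexed 0-based too: l t, u t bound g(t+1) - g(t). *)

Definition bounded_derivative (R : realType) (n : nat) (l u : nat -> R)
    (g : 'I_n -> R) : Prop :=
  forall i j : 'I_n, nat_of_ord j = (nat_of_ord i).+1 ->
    l i <= g j - g i <= u i.

(* A randomized adaptive algorithm with oracle access to f : [n] -> R and
   sample access to an unknown distribution D on [n], as a decision tree:
   - Leaf b    : stop, accept iff b;
   - Sample k  : draw x ~ D, observe x and f x, continue with k x (f x);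
   - Query x k : query f at x, continue with k (f x);
   - Coin k    : flip a fair internal coin b, continue with k b. *)
Inductive tester (R : realType) (n : nat) : Type :=
| Leaf of bool
| Sample of ('I_n -> R -> tester R n)
| Query of 'I_n & (R -> tester R n)
| Coin of (bool -> tester R n).

Fixpoint acc_prob (R : realType) (n : nat) (T : tester R n)
    (f : 'I_n -> R) (p : 'I_n -> R) : R :=
  match T with
  | Leaf b => if b then 1 else 0
  | Sample k => \sum_(x < n) p x * acc_prob (k x (f x)) f p
  | Query x k => acc_prob (k (f x)) f p
  | Coin k => (acc_prob (k true) f p + acc_prob (k false) f p) / 2
  end.

Fixpoint queries_le (R : realType) (n : nat) (T : tester R n) (q : nat) : Prop :=
  match T with
  | Leaf _ => True
  | Sample k => match q with 0 => False | q'.+1 => forall x y, queries_le (k x y) q' end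
  | Query _ k => match q with 0 => False | q'.+1 => forall y, queries_le (k y) q' end
  | Coin k => forall b, queries_le (k b) q
  end.

Definition is_distribution (R : realType) (n : nat) (p : 'I_n -> R) : Prop :=
  (forall x, 0 <= p x) /\ \sum_(x < n) p x = 1.

Definition dist_D (R : realType) (n : nat) (p f g : 'I_n -> R) : R :=
  \sum_(x < n | f x != g x) p x.

Definition df_tester (R : realType) (n : nat) (P : ('I_n -> R) -> Prop)
    (eps : R) (T : tester R n) : Prop :=
  forall (p : 'I_n -> R), is_distribution p ->
  forall f : 'I_n -> R,
    (P f -> acc_prob T f p > 2/3) /\
    ((forall g, P g -> dist_D p f g > eps) -> 1 - acc_prob T f p > 2/3).

From HB Require Import structures.
From mathcomp Require Import all_boot all_order all_algebra.
From mathcomp Require Import reals exp.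
From mathcomp Require Import lra zify.
Import Order.TTheory GRing.Theory Num.Theory.
Set Implicit Arguments. Unset Strict Implicit.
Local Open Scope ring_scope.

(* Two values [f x], [f z] are consistent with the property when the difference
   lies between the partial sums of [l] and [u] over the interval from [x] to [z];
   a function has the property iff all pairs of its values are consistent, and a
   partial function extends to one with the property iff its values are pairwise
   consistent.  The tester samples [x ~ D] and checks [f x] against [f z] for
   every pivot [z] of the binary search for [x] in [0, n).  Two points [x <= y]
   that pass share a pivot [z] with [x <= z <= y] (or coincide), so by
   transitivity of consistency the passing points are pairwise consistent, and
   [f] agrees with some [g] in the property on them.  Hence if [f] is
   [eps]-far, a sample fails with probability [> eps], and [2 / eps] rounds,
   each of [log n + O(1)] queries, reject with probability [> 2/3]. *)

Fixpoint search_path (k a b x : nat) : seq nat :=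
  match k with
  | 0 => [::]
  | k.+1 => if (b <= a.+1)%N then [::] else
      let m := ((a + b)./2)%N in
      m :: (if (x < m)%N then search_path k a m x else search_path k m b x)
  end.

Lemma mid_between a b : (a.+1 < b)%N -> (a < (a + b)./2 < b)%N.
Proof. by move=> h; have := half_leq; lia. Qed.

Lemma search_path_in k a b x z : z \in search_path k a b x -> (a < z < b)%N.
Proof.
elim: k a b => [|k IH] a b //=.
case: ifP => // hb; rewrite inE => /orP [/eqP ->|].
  by apply: mid_between; lia.
have := mid_between (a:=a) (b:=b).
by case: ifP => _ + /IH; lia.
Qed.

Lemma size_search_path k a b x : (a < b)%N ->
  (2 ^ size (search_path k a b x) <= maxn 1 ((b - a).-1.*2))%N.
Proof.
elim: k a b => [|k IH] a b ab_lt; first by rewrite /= leq_maxl.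
rewrite [search_path _ _ _ _]/=; case: ifP => hb; first by rewrite leq_maxl.
have := mid_between (a:=a) (b:=b); rewrite [size _]/= expnS.
case: ifP => _; [have := IH a ((a + b)./2)%N | have := IH ((a + b)./2)%N b]; lia.
Qed.

Lemma search_path_common_pivot k a b x y :
  (b - a <= k)%N -> (a <= x)%N -> (x <= y)%N -> (y < b)%N ->
  x = y \/ exists2 z, (z \in search_path k a b x) && (z \in search_path k a b y)
                    & (x <= z <= y)%N.
Proof.
elim: k a b => [|k IH] a b hk hx hxy hy; first lia.
rewrite /=; case: ifP => hb; first by left; lia.
have hm := mid_between (a:=a) (b:=b).
set m := ((a + b)./2)%N in hm *.
have in_tail w s : w \in s -> w \in m :: s by rewrite inE => ->; rewrite orbT.
have [y_lt|y_ge] := ltnP y m.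
  rewrite (leq_ltn_trans hxy y_lt).
  have [->|[z /andP [zx zy] xzy]] := IH a m ltac:(lia) hx hxy y_lt; first by left.
  by right; exists z; rewrite ?in_tail.
have [x_lt|x_ge] := ltnP x m.
  by right; exists m; rewrite ?inE ?eqxx //; lia.
have [->|[z /andP [zx zy] xzy]] := IH m b ltac:(lia) x_ge hxy hy; first by left.
by right; exists z; rewrite ?in_tail.
Qed.

Lemma size_search_path_log N (x : nat) : (0 < N)%N ->
  (size (search_path N 0 N x) <= (trunc_log 2 N).+1)%N.
Proof.
move=> N_gt0; rewrite -trunc_log2_double //; apply: trunc_log_max => //.
by apply: leq_trans (size_search_path N x N_gt0) _; rewrite subn0; lia.
Qed.

Section Consistency.
Variables (R : realType) (l u : nat -> R).

Definition lsum a b : R := \sum_(a <= t < b) l t.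
Definition usum a b : R := \sum_(a <= t < b) u t.

Definition consistent (x : nat) (fx : R) (z : nat) (fz : R) : bool :=
  if (x <= z)%N then lsum x z <= fz - fx <= usum x z
  else lsum z x <= fx - fz <= usum z x.

Lemma lsum_nn a : lsum a a = 0. Proof. by rewrite /lsum big_geq. Qed.
Lemma usum_nn a : usum a a = 0. Proof. by rewrite /usum big_geq. Qed.

Lemma lsum_cat a b c : (a <= b <= c)%N -> lsum a c = lsum a b + lsum b c.
Proof. by case/andP=> ab bc; rewrite /lsum -big_cat_nat. Qed.
Lemma usum_cat a b c : (a <= b <= c)%N -> usum a c = usum a b + usum b c.
Proof. by case/andP=> ab bc; rewrite /usum -big_cat_nat. Qed.

Lemma lsumS a : lsum a a.+1 = l a. Proof. by rewrite /lsum big_nat1. Qed.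
Lemma usumS a : usum a a.+1 = u a. Proof. by rewrite /usum big_nat1. Qed.

Lemma consistent_refl x fx : consistent x fx x fx.
Proof. by rewrite /consistent leqnn lsum_nn usum_nn subrr lexx. Qed.

Lemma consistent_sym x fx z fz : consistent x fx z fz = consistent z fz x fx.
Proof.
rewrite /consistent; case: (ltngtP x z) => // <-.
rewrite lsum_nn usum_nn; apply/idP/idP => /andP [? ?]; apply/andP; split; lra.
Qed.

Lemma consistent_trans x fx z fz y fy : (x <= z <= y)%N ->
  consistent x fx z fz -> consistent z fz y fy -> consistent x fx y fy.
Proof.
move=> xzy; case/andP: (xzy) => xz zy.
rewrite /consistent xz zy (leq_trans xz zy) (lsum_cat xzy) (usum_cat xzy).
by move=> /andP [? ?] /andP [? ?]; apply/andP; split; lra.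
Qed.

End Consistency.

Section Extension.
Variables (R : realType) (n : nat) (l u : nat -> R).
Local Notation N := n.+1.
Local Notation P := (bounded_derivative l u).

Lemma bounded_derivative_sum (f : 'I_N -> R) : P f ->
  forall a b, (a <= b <= n)%N -> lsum l a b <= f (inord b) - f (inord a) <= usum u a b.
Proof.
move=> Pf a; elim=> [|b IH] /andP [ab bn].
  by move: ab; rewrite leqn0 => /eqP ->; rewrite lsum_nn usum_nn subrr lexx.
have [ab_lt|?|<-] := ltngtP a b.+1; [|lia|by rewrite lsum_nn usum_nn subrr lexx].
have abb : (a <= b <= b.+1)%N by apply/andP; split; lia.
rewrite (lsum_cat l abb) (usum_cat u abb) lsumS usumS.
have /andP [? ?] := IH ltac:(apply/andP; split; lia).
have := Pf (inord b) (inord b.+1); rewrite !inordK; try lia.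
by move=> /(_ erefl) /andP [? ?]; apply/andP; split; lra.
Qed.

Lemma bounded_derivative_consistent (f : 'I_N -> R) : P f ->
  forall x z : 'I_N, consistent l u x (f x) z (f z).
Proof.
move=> Pf.
suff le_case (x z : 'I_N) : (x <= z)%N -> consistent l u x (f x) z (f z).
  by move=> x z; case: (leqP x z) => [|/ltnW] /le_case //; rewrite consistent_sym.
move=> xz; rewrite /consistent xz.
have := bounded_derivative_sum Pf (a:=x) (b:=z); rewrite !inord_val; apply.
by rewrite xz -ltnS ltn_ord.
Qed.

Hypothesis lu_lt : forall t : nat, (t.+1 < N)%N -> l t < u t.

(* The least value at [i] of a function with the property that agrees with [f] at [a]. *)
Definition lower_envelope (f : 'I_N -> R) (a : 'I_N) (i : nat) : R :=
  f a + (if (a <= i)%N then lsum l a i else - usum u i a).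

Lemma lower_envelope_step f a i : (i.+1 < N)%N ->
  l i <= lower_envelope f a i.+1 - lower_envelope f a i <= u i.
Proof.
move=> iN; have := lu_lt iN; rewrite /lower_envelope.
have [a_lt|a_gt|a_eq] := ltngtP a i.+1.
- have ai : (a <= i <= i.+1)%N by rewrite -ltnS a_lt /=.
  case/andP: (ai) => -> _; rewrite (lsum_cat l ai) lsumS => ?.
  by apply/andP; split; lra.
- have iia : (i <= i.+1 <= a)%N by rewrite leqnSn ltnW.
  rewrite leqNgt (ltnW a_gt) /= (usum_cat u iia) usumS => ?.
  by apply/andP; split; lra.
- by rewrite a_eq ltnn lsum_nn usumS => ?; apply/andP; split; lra.
Qed.

Lemma lower_envelope_self f (a : 'I_N) : lower_envelope f a a = f a.
Proof. by rewrite /lower_envelope leqnn lsum_nn addr0. Qed.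

Lemma lower_envelope_le f (a x : 'I_N) :
  consistent l u a (f a) x (f x) -> lower_envelope f a x <= f x.
Proof. by rewrite /lower_envelope /consistent; case: ifP => _ /andP [? ?]; lra. Qed.

(* The pointwise maximum of the lower envelopes of the points of [G]; if [G] is
   empty we fall back to the envelope of an arbitrary point. *)
Lemma consistent_extension (G : pred 'I_N) (f : 'I_N -> R) :
  (forall x y, G x -> G y -> consistent l u x (f x) y (f y)) ->
  exists2 g, P g & forall x, G x -> f x = g x.
Proof.
move=> Gcons.
have [a0 Ga0|G0] := pickP G; last first.
  exists (fun i : 'I_N => lower_envelope f ord0 i); last by move=> x; rewrite G0.
  by move=> i j ij; rewrite ij; apply: lower_envelope_step; rewrite -ij.
pose g (i : 'I_N) := lower_envelope f [arg max_(a > a0 | G a) lower_envelope f a i]%O i.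
exists g.
  move=> i j ij; rewrite /g ij.
  have iN : (i.+1 < N)%N by rewrite -ij.
  case: arg_maxP => // b Gb b_max; case: arg_maxP => // c Gc c_max.
  have /andP [? ?] := lower_envelope_step f b iN.
  have /andP [? ?] := lower_envelope_step f c iN.
  have := b_max c Gc; have := c_max b Gb.
  by move=> /= ? ?; apply/andP; split; lra.
move=> x Gx; rewrite /g; case: arg_maxP => // b Gb b_max.
have := b_max x Gx; have := lower_envelope_le (Gcons _ _ Gb Gx).
by rewrite lower_envelope_self /=; lra.
Qed.

End Extension.

Lemma queries_le_mono (R : realType) m (T : tester R m) q q' :
  (q <= q')%N -> queries_le T q -> queries_le T q'.
Proof.
elim: T q q' => [b|k IH|x k IH|k IH] [|q] [|q'] //= qq' T_q.
- by move=> x y; apply: IH (T_q x y).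
- by move=> y; apply: IH (T_q y).
- by move=> b; apply: IH (T_q b).
- by move=> b; apply: IH (T_q b).
Qed.

Section PathTester.
Variables (R : realType) (n : nat) (l u : nat -> R).
Local Notation N := n.+1.

Fixpoint check_path (zs : seq nat) (x : 'I_N) (fx : R) (next : tester R N) :=
  if zs is z :: zs then
    Query (inord z) (fun fz =>
      if consistent l u x fx z fz then check_path zs x fx next else Leaf R N false)
  else next.

Fixpoint path_tester (k : nat) : tester R N :=
  if k is k.+1 then Sample (fun x fx => check_path (search_path N 0 N x) x fx (path_tester k))
  else Leaf R N true.

Definition passes (f : 'I_N -> R) (x : 'I_N) : bool :=
  all (fun z => consistent l u x (f x) z (f (inord z))) (search_path N 0 N x).

Lemma acc_prob_check_path zs x fx next f p : acc_prob (check_path zs x fx next) f p =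
  if all (fun z => consistent l u x fx z (f (inord z))) zs then acc_prob next f p else 0.
Proof. by elim: zs => [|z zs IH] //=; case: ifP. Qed.

Lemma acc_prob_path_tester k f p :
  acc_prob (path_tester k) f p = (\sum_(x < N | passes f x) p x) ^+ k.
Proof.
elim: k => [|k IH] /=; first by rewrite expr0.
rewrite exprS big_distrl /= [in RHS]big_mkcond /=.
apply: eq_bigr => x _; rewrite acc_prob_check_path IH /passes.
by case: ifP; rewrite ?mulr0.
Qed.

Lemma queries_le_check_path zs x fx next q :
  queries_le next q -> queries_le (check_path zs x fx next) (size zs + q).
Proof. by elim: zs => [|z zs IH] //= next_q fz; case: ifP => // _; apply: IH. Qed.

Lemma queries_le_path_tester k d :
  (forall x : 'I_N, size (search_path N 0 N x) <= d)%N ->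
  queries_le (path_tester k) (k * d.+1).
Proof.
move=> size_le; elim: k => [|k IH] //; rewrite mulSn addSn /= => x fx.
apply: queries_le_mono (queries_le_check_path _ x fx IH).
by rewrite leq_add2r; apply: size_le.
Qed.

Lemma passes_consistent f x y : passes f x -> passes f y ->
  consistent l u x (f x) y (f y).
Proof.
wlog xy : x y / (x <= y)%N.
  move=> W; case: (leqP x y) => [/W //|/ltnW yx px py].
  by rewrite consistent_sym; apply: W.
move=> px py.
have [/val_inj ->|[z /andP [zx zy] xzy]] :=
  search_path_common_pivot (leq_subr 0 N) (leq0n x) xy (ltn_ord y).
  exact: consistent_refl.
apply: consistent_trans xzy (allP px z zx) _.
by rewrite consistent_sym (allP py z zy).
Qed.

Lemma bounded_derivative_passes f : bounded_derivative l u f -> forall x, passes f x.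
Proof.
move=> Pf x; apply/allP => z z_in; have /andP [_ zN] := search_path_in z_in.
by have := bounded_derivative_consistent Pf x (inord z); rewrite inordK.
Qed.

End PathTester.

Lemma dist_D_le_disagree (R : realType) m (p f g : 'I_m -> R) (G : pred 'I_m) :
  (forall x, 0 <= p x) -> (forall x, G x -> f x = g x) ->
  dist_D p f g <= \sum_(x < m | ~~ G x) p x.
Proof.
move=> p_ge0 fg; rewrite /dist_D [X in _ <= X]big_mkcond [X in X <= _]big_mkcond.
apply: ler_sum => x _; case: (boolP (G x)) => [Gx|_] /=; last by case: ifP.
by rewrite fg // eqxx.
Qed.

Lemma dist_D_le1 (R : realType) m (p f g : 'I_m -> R) :
  is_distribution p -> dist_D p f g <= 1.
Proof.
case=> p_ge0 p_sum1; rewrite -p_sum1 [X in _ <= X](bigID (fun x => f x != g x)) /=.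
by rewrite lerDl sumr_ge0.
Qed.

Lemma passes_mass_far (R : realType) n (l u : nat -> R) (eps : R)
    (p f : 'I_n.+1 -> R) :
  (forall t : nat, (t.+1 < n.+1)%N -> l t < u t) -> is_distribution p ->
  (forall g, bounded_derivative l u g -> dist_D p f g > eps) ->
  \sum_(x < n.+1 | passes l u f x) p x < 1 - eps.
Proof.
move=> lu_lt [p_ge0 p_sum1] far.
have [g Pg fg] := consistent_extension lu_lt (@passes_consistent R n l u f).
have := far g Pg; have := dist_D_le_disagree p_ge0 fg.
by move: p_sum1; rewrite (bigID (passes l u f)) /=; lra.
Qed.

Lemma bernoulli_ineq (R : realFieldType) (e : R) k : 0 <= e -> 1 + k%:R * e <= (1 + e) ^+ k.
Proof.
move=> e_ge0; elim: k => [|k IH]; first by rewrite mul0r addr0 expr0.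
rewrite exprS -natr1.
have : (1 + e) * (1 + k%:R * e) <= (1 + e) * (1 + e) ^+ k by apply: ler_wpM2l => //; lra.
have : 0 <= k%:R * e by apply: mulr_ge0.
by nra.
Qed.

(* [(1 - e)^k (1 + e)^k <= 1] and [(1 + e)^k >= 1 + k e > 3]. *)
Lemma expr_lt_third (R : realFieldType) (e s : R) k : 0 < e < 1 -> 0 <= s <= 1 - e ->
  2 < k%:R * e -> s ^+ k < 1 / 3.
Proof.
move=> /andP [e_gt0 e_lt1] /andP [s_ge0 s_le] ke.
have : s ^+ k <= (1 - e) ^+ k by apply: lerXn2r; rewrite ?nnegrE //; lra.
have := bernoulli_ineq k (ltW e_gt0).
have : ((1 - e) * (1 + e)) ^+ k <= 1 by apply: exprn_ile1; nra.
rewrite exprMn.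
have : 0 <= (1 - e) ^+ k by apply: exprn_ge0; lra.
have : 0 <= s ^+ k by apply: exprn_ge0.
by nra.
Qed.

Lemma trunc_log_ln (R : realType) N : (0 < N)%N ->
  (trunc_log 2 N)%:R * ln (2 : R) <= ln (N%:R : R).
Proof.
move=> N_gt0; rewrite mulr_natl -lnXn; last by lra.
rewrite ler_ln ?posrE ?exprn_gt0 ?ltr0n //.
by rewrite -natrX ler_nat trunc_logP.
Qed.

Lemma query_budget (R : realType) (eps : R) k N : 0 < eps < 1 -> (1 < N)%N ->
  k%:R <= 2 / eps + 1 ->
  ((k * (trunc_log 2 N).+2)%:R : R) <= 24 / eps * (ln (N%:R : R) / ln 2).
Proof.
move=> /andP [eps_gt0 eps_lt1] N_gt1 k_le.
have ln2_gt0 : 0 < ln (2 : R) by apply: ln_gt0; lra.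
set L := ln (N%:R : R) / ln 2.
have L_ln2 : L * ln 2 = ln N%:R by rewrite /L divfK //; lra.
have ln2_le : ln (2 : R) <= ln N%:R by rewrite ler_ln ?posrE ?ler_nat ?ltr0n //; lia.
have t_le := trunc_log_ln R (ltnW N_gt1).
have inv_eps : eps * eps^-1 = 1 by rewrite mulfV //; lra.
have L_ge1 : 1 <= L by nra.
have k3 : k%:R <= 3 * eps^-1 :> R by move: k_le; nra.
have t3 : (trunc_log 2 N).+2%:R <= 3 * L :> R by rewrite -!natr1; nra.
rewrite natrM mulrAC -mulrA -/L.
apply: le_trans (ler_pM _ _ k3 t3) _ => //; nra.
Qed.

Lemma accept_all_df_tester (R : realType) m (P : ('I_m -> R) -> Prop) (eps : R) :
  (forall p, is_distribution p -> forall f, exists2 g, P g & dist_D p f g <= eps) ->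
  df_tester P eps (Leaf R m true).
Proof.
move=> near p p_dist f; split=> [_ /=|far]; first lra.
by have [g /far] := near p p_dist f; lra.
Qed.

Lemma path_tester_df_tester (R : realType) n (l u : nat -> R) (eps : R) k :
  (forall t : nat, (t.+1 < n.+1)%N -> l t < u t) -> 0 < eps < 1 -> 2 < k%:R * eps ->
  df_tester (bounded_derivative l u) eps (path_tester n l u k).
Proof.
move=> lu_lt eps01 k_eps p p_dist f; rewrite acc_prob_path_tester.
split=> [Pf|far].
  rewrite (eq_bigl xpredT) ?p_dist.2 ?expr1n; first lra.
  exact: bounded_derivative_passes Pf.
set s := \sum_(x < n.+1 | passes l u f x) p x.
have s_ge0 : 0 <= s by apply: sumr_ge0 => x _; apply: p_dist.1.
have s_lt : s < 1 - eps := passes_mass_far lu_lt p_dist far.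
have s01 : 0 <= s <= 1 - eps by rewrite s_ge0 ltW.
by have := expr_lt_third eps01 s01 k_eps; lra.
Qed.

Theorem theorem4p4 (R : realType) (n : nat) (eps : R) (l u : nat -> R) :
  0 < eps -> (0 < n)%N ->
  (forall t : nat, (t.+1 < n)%N -> l t < u t) ->
  exists (T : tester R n) (q : nat),
    (q%:R <= 24 / eps * (ln (n%:R : R) / ln 2)) /\
    queries_le T q /\
    df_tester (bounded_derivative l u) eps T.
Proof.
move=> eps_gt0; case: n => // n _ lu_lt.
have [trivial|] := boolP ((n == 0%N) || (1 <= eps)).
  exists (Leaf R n.+1 true), 0%N; split; [|split=> //].
    by rewrite !mulr_ge0 ?invr_ge0 ?ln_ge0 ?ler1n ?(ltW eps_gt0) ?ler1Sn.
  apply: accept_all_df_tester => p p_dist f.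
  case/orP: trivial => [/eqP n0|eps_ge1].
    exists f; last by rewrite /dist_D big_pred0 ?(ltW eps_gt0) // => x; rewrite eqxx.
    by subst n => -[[|//] ?] [[|//] ?].
  have no_pairs (x y : 'I_n.+1) :
    xpred0 x -> xpred0 y -> consistent l u x (f x) y (f y) by [].
  have [g Pg _] := consistent_extension lu_lt no_pairs.
  by exists g; last by apply: le_trans (dist_D_le1 f g p_dist) _.
rewrite negb_or -ltNge => /andP [n_neq0 eps_lt1].
have eps01 : 0 < eps < 1 by rewrite eps_gt0.
have [k k_eps k_le] : exists2 k : nat, 2 < k%:R * eps & k%:R <= 2 / eps + 1.
  exists (Num.truncn (2 / eps)).+1; first by rewrite -ltr_pdivrMr // truncnS_gt.
  by rewrite -natr1 lerD2r truncn_le divr_ge0 // ltW.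
exists (path_tester n l u k), (k * (trunc_log 2 n.+1).+2)%N; split; [|split].
- by apply: query_budget; rewrite // ltnS lt0n.
- by apply: queries_le_path_tester => x; exact: size_search_path_log.
- exact: path_tester_df_tester.
Qed.
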